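(* For all closed terms $P,Q\in\mathcal S_A$: $\mathrm{EqFSCL}\vdash P=Q$ if and only if $\mathrm{FSCL}\vdash P=Q$, where $\mathrm{FSCL}\vdash P=Q$ means that $P=Q$ is derivable in equational logic over the signature $\Sigma_{CP}(A)\cup\Sigma_{SCL}(A)$ from the axioms CP1–CP4 together with $\neg x=\mathsf F\triangleleft x\triangleright\mathsf T$, $x\land^\circ y=y\triangleleft x\triangleright\mathsf F$ and $x\lor^\circ y=\mathsf T\triangleleft x\triangleright y$.
   Context: Let $A$ be a nonempty set of atoms. $\Sigma_{SCL}(A)$ has constants $\mathsf T,\mathsf F$, atoms $a\in A$, unary $\neg$, binary $\land^\circ$ (left-sequential conjunction) and $\lor^\circ$ (left-sequential disjunction); $\mathcal S_A$ is the set of its closed terms. $\Sigma_{CP}(A)$ has constants $\mathsf T,\mathsf F$, atoms $a\in A$, and Hoare's ternary conditional $x\triangleleft y\triangleright z$ (''if $y$ then $x$ else $z$''). CP consists of: (CP1) $x\triangleleft\mathsf T\triangleright y=x$; (CP2) $x\triangleleft\mathsf F\triangleright y=y$; (CP3) $\mathsf T\triangleleft x\triangleright\mathsf F=x$; (CP4) $x\triangleleft(y\triangleleft z\triangleright u)\triangleright v=(x\triangleleft y\triangleright v)\triangleleft z\triangleright(x\triangleleft u\triangleright v)$. (In the paper, FSCL is defined as the logic whose consequences are those of exporting $\{\mathsf T,\neg,\land^\circ\}$ from CP plus the definitions of $\neg$ and $\land^\circ$, with $\mathsf F=\neg\mathsf T$ and $x\lor^\circ y=\neg(\neg x\land^\circ\neg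 y)$ added; these are derivably equal to the definitions above.) EqFSCL is the set of equations in variables $x,y,z$: (F1) $\mathsf F=\neg\mathsf T$; (F2) $x\lor^\circ y=\neg(\neg x\land^\circ\neg y)$; (F3) $\neg\neg x=x$; (F4) $\mathsf T\land^\circ x=x$; (F5) $x\lor^\circ\mathsf F=x$; (F6) $\mathsf F\land^\circ x=\mathsf F$; (F7) $(x\land^\circ y)\land^\circ z=x\land^\circ(y\land^\circ z)$; (F8) $\neg x\land^\circ\mathsf F=x\land^\circ\mathsf F$; (F9) $(x\land^\circ\mathsf F)\lor^\circ y=(x\lor^\circ\mathsf T)\land^\circ y$; (F10) $(x\land^\circ y)\lor^\circ(z\land^\circ\mathsf F)=(x\lor^\circ(z\land^\circ\mathsf F))\land^\circ(y\lor^\circ(z\land^\circ\mathsf F))$. $\vdash$ denotes derivability in equational logic. *)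

Set Implicit Arguments.

Section Terms.
Variable A : Type.

Inductive sterm : Type :=
| SVar : nat -> sterm
| ST : sterm
| SF : sterm
| SAtom : A -> sterm
| SNeg : sterm -> sterm
| SAnd : sterm -> sterm -> sterm
| SOr : sterm -> sterm -> sterm.

Fixpoint sclosed (t : sterm) : Prop :=
  match t with
  | SVar _ => False
  | ST | SF | SAtom _ => True
  | SNeg x => sclosed x
  | SAnd x y | SOr x y => sclosed x /\ sclosed y
  end.

Fixpoint ssubst (s : nat -> sterm) (t : sterm) : sterm :=
  match t with
  | SVar n => s n
  | ST => ST | SF => SF | SAtom a => SAtom a
  | SNeg x => SNeg (ssubst s x)
  | SAnd x y => SAnd (ssubst s x) (ssubst s y)
  | SOr x y => SOr (ssubst s x) (ssubst s y)
  end.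

(* The axioms EqFSCL (x = SVar 0, y = SVar 1, z = SVar 2). *)
Inductive EqFSCL_axiom : sterm -> sterm -> Prop :=
| F1 : EqFSCL_axiom SF (SNeg ST)
| F2 : EqFSCL_axiom (SOr (SVar 0) (SVar 1)) (SNeg (SAnd (SNeg (SVar 0)) (SNeg (SVar 1))))
| F3 : EqFSCL_axiom (SNeg (SNeg (SVar 0))) (SVar 0)
| F4 : EqFSCL_axiom (SAnd ST (SVar 0)) (SVar 0)
| F5 : EqFSCL_axiom (SOr (SVar 0) SF) (SVar 0)
| F6 : EqFSCL_axiom (SAnd SF (SVar 0)) SF
| F7 : EqFSCL_axiom (SAnd (SAnd (SVar 0) (SVar 1)) (SVar 2))
                    (SAnd (SVar 0) (SAnd (SVar 1) (SVar 2)))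
| F8 : EqFSCL_axiom (SAnd (SNeg (SVar 0)) SF) (SAnd (SVar 0) SF)
| F9 : EqFSCL_axiom (SOr (SAnd (SVar 0) SF) (SVar 1)) (SAnd (SOr (SVar 0) ST) (SVar 1))
| F10 : EqFSCL_axiom (SOr (SAnd (SVar 0) (SVar 1)) (SAnd (SVar 2) SF))
                     (SAnd (SOr (SVar 0) (SAnd (SVar 2) SF)) (SOr (SVar 1) (SAnd (SVar 2) SF))).

Inductive EqFSCL_derives : sterm -> sterm -> Prop :=
| sd_ax : forall l r (s : nat -> sterm), EqFSCL_axiom l r ->
    EqFSCL_derives (ssubst s l) (ssubst s r)
| sd_refl : forall t, EqFSCL_derives t t
| sd_sym : forall t u, EqFSCL_derives t u -> EqFSCL_derives u t
| sd_trans : forall t u v, EqFSCL_derives t u -> EqFSCL_derives u v -> EqFSCL_derives t v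
| sd_neg : forall t u, EqFSCL_derives t u -> EqFSCL_derives (SNeg t) (SNeg u)
| sd_and : forall t t' u u', EqFSCL_derives t t' -> EqFSCL_derives u u' ->
    EqFSCL_derives (SAnd t u) (SAnd t' u')
| sd_or : forall t t' u u', EqFSCL_derives t t' -> EqFSCL_derives u u' ->
    EqFSCL_derives (SOr t u) (SOr t' u').

Inductive cterm : Type :=
| CVar : nat -> cterm
| CT : cterm
| CF : cterm
| CAtom : A -> cterm
| CNeg : cterm -> cterm
| CAnd : cterm -> cterm -> cterm
| COr : cterm -> cterm -> cterm
| CCond : cterm -> cterm -> cterm -> cterm.  (* CCond x y z = x <| y |> z : "if y then x else z" *)

Fixpoint csubst (s : nat -> cterm) (t : cterm) : cterm :=
  match t with
  | CVar n => s n
  | CT => CT | CF => CF | CAtom a => CAtom a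
  | CNeg x => CNeg (csubst s x)
  | CAnd x y => CAnd (csubst s x) (csubst s y)
  | COr x y => COr (csubst s x) (csubst s y)
  | CCond x y z => CCond (csubst s x) (csubst s y) (csubst s z)
  end.

Fixpoint embed (t : sterm) : cterm :=
  match t with
  | SVar n => CVar n
  | ST => CT | SF => CF | SAtom a => CAtom a
  | SNeg x => CNeg (embed x)
  | SAnd x y => CAnd (embed x) (embed y)
  | SOr x y => COr (embed x) (embed y)
  end.

Inductive FSCL_axiom : cterm -> cterm -> Prop :=
| CP1 : FSCL_axiom (CCond (CVar 0) CT (CVar 1)) (CVar 0)
| CP2 : FSCL_axiom (CCond (CVar 0) CF (CVar 1)) (CVar 1)
| CP3 : FSCL_axiom (CCond CT (CVar 0) CF) (CVar 0)
| CP4 : FSCL_axiom (CCond (CVar 0) (CCond (CVar 1) (CVar 2) (CVar 3)) (CVar 4))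
                   (CCond (CCond (CVar 0) (CVar 1) (CVar 4)) (CVar 2)
                          (CCond (CVar 0) (CVar 3) (CVar 4)))
| Def_neg : FSCL_axiom (CNeg (CVar 0)) (CCond CF (CVar 0) CT)
| Def_and : FSCL_axiom (CAnd (CVar 0) (CVar 1)) (CCond (CVar 1) (CVar 0) CF)
| Def_or : FSCL_axiom (COr (CVar 0) (CVar 1)) (CCond CT (CVar 0) (CVar 1)).

Inductive FSCL_derives : cterm -> cterm -> Prop :=
| cd_ax : forall l r (s : nat -> cterm), FSCL_axiom l r ->
    FSCL_derives (csubst s l) (csubst s r)
| cd_refl : forall t, FSCL_derives t t
| cd_sym : forall t u, FSCL_derives t u -> FSCL_derives u t
| cd_trans : forall t u v, FSCL_derives t u -> FSCL_derives u v -> FSCL_derives t v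
| cd_neg : forall t u, FSCL_derives t u -> FSCL_derives (CNeg t) (CNeg u)
| cd_and : forall t t' u u', FSCL_derives t t' -> FSCL_derives u u' ->
    FSCL_derives (CAnd t u) (CAnd t' u')
| cd_or : forall t t' u u', FSCL_derives t t' -> FSCL_derives u u' ->
    FSCL_derives (COr t u) (COr t' u')
| cd_cond : forall t t' u u' v v', FSCL_derives t t' -> FSCL_derives u u' ->
    FSCL_derives v v' -> FSCL_derives (CCond t u v) (CCond t' u' v').

End Terms.

(* Closed terms of both signatures are interpreted as binary decision trees over A:
   an atom a is the tree with root a and leaves T, F, and [y <| x |> z] replaces the
   T-leaves of the tree of x by the tree of y and its F-leaves by that of z; negation and
   the sequential connectives act as their CP definitions prescribe.  Both axiom systems
   are sound for this interpretation, and with CP4 every closed term is rewritten to the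
   basic form read off its tree, so FSCL |- P = Q iff P and Q have the same tree.

   It remains to show that closed terms with the same tree are EqFSCL-equal.  Every closed
   term is EqFSCL-equal to a normal form: a T-term, an F-term (their trees have only
   T-, resp. only F-leaves), or a T-term conjoined with an S-term, built by conjunction
   and disjunction from the literals (a /\o t) \/o f and (~a /\o t) \/o f.  Distinct normal
   forms have distinct trees.  For S-terms the term is read back off its tree: the tree
   of s /\o d is that of s with the tree of d grafted at its T-leaves, and this splitting
   is unique because d is not itself a conjunction and because the two branches below the
   root of an S-term tree have different ratios of F- to T-leaves, a property that
   grafting preserves. *)

From Stdlib Require Import Setoid Arith Lia Bool List.
Import ListNotations.

Set Implicit Arguments.
Unset Strict Implicit.

Add Parametric Relation (A : Type) : (sterm A) (@EqFSCL_derives A)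
  reflexivity proved by (@sd_refl A) symmetry proved by (@sd_sym A)
  transitivity proved by (@sd_trans A) as EqFSCL_equivalence.
Add Parametric Morphism (A : Type) : (@SNeg A) with signature
  (@EqFSCL_derives A) ==> (@EqFSCL_derives A) as SNeg_EqFSCL.
Proof. exact (@sd_neg A). Qed.
Add Parametric Morphism (A : Type) : (@SAnd A) with signature
  (@EqFSCL_derives A) ==> (@EqFSCL_derives A) ==> (@EqFSCL_derives A) as SAnd_EqFSCL.
Proof. intros; apply sd_and; assumption. Qed.
Add Parametric Morphism (A : Type) : (@SOr A) with signature
  (@EqFSCL_derives A) ==> (@EqFSCL_derives A) ==> (@EqFSCL_derives A) as SOr_EqFSCL.
Proof. intros; apply sd_or; assumption. Qed.

Section FSCL.
Variable A : Type.

(** * Decision trees and soundness *)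

Inductive tree := Leaf (b : bool) | Node (a : A) (l r : tree).

Fixpoint tree_if (t p q : tree) : tree :=
  match t with
  | Leaf true => p
  | Leaf false => q
  | Node a l r => Node a (tree_if l p q) (tree_if r p q)
  end.

Lemma tree_if_assoc t p q p' q' :
  tree_if (tree_if t p q) p' q' = tree_if t (tree_if p p' q') (tree_if q p' q').
Proof. induction t as [[]|a l IHl r IHr]; simpl; congruence. Qed.

Lemma tree_if_leaves t : tree_if t (Leaf true) (Leaf false) = t.
Proof. induction t as [[]|a l IHl r IHr]; simpl; congruence. Qed.

Fixpoint ssem (e : nat -> tree) (t : sterm A) : tree :=
  match t with
  | SVar _ n => e n
  | ST _ => Leaf true
  | SF _ => Leaf false
  | SAtom a => Node a (Leaf true) (Leaf false)
  | SNeg x => tree_if (ssem e x) (Leaf false) (Leaf true)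
  | SAnd x y => tree_if (ssem e x) (ssem e y) (Leaf false)
  | SOr x y => tree_if (ssem e x) (Leaf true) (ssem e y)
  end.

Fixpoint csem (e : nat -> tree) (t : cterm A) : tree :=
  match t with
  | CVar _ n => e n
  | CT _ => Leaf true
  | CF _ => Leaf false
  | CAtom a => Node a (Leaf true) (Leaf false)
  | CNeg x => tree_if (csem e x) (Leaf false) (Leaf true)
  | CAnd x y => tree_if (csem e x) (csem e y) (Leaf false)
  | COr x y => tree_if (csem e x) (Leaf true) (csem e y)
  | CCond x y z => tree_if (csem e y) (csem e x) (csem e z)
  end.

Lemma ssem_subst e s t : ssem e (ssubst s t) = ssem (fun n => ssem e (s n)) t.
Proof. induction t; simpl; congruence. Qed.

Lemma csem_subst e s t : csem e (csubst s t) = csem (fun n => csem e (s n)) t.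
Proof. induction t; simpl; congruence. Qed.

Lemma csem_embed e t : csem e (embed t) = ssem e t.
Proof. induction t; simpl; congruence. Qed.

Lemma EqFSCL_sound t u : EqFSCL_derives t u -> forall e, ssem e t = ssem e u.
Proof.
  induction 1; intro e; simpl; try congruence.
  rewrite !ssem_subst.
  destruct H; simpl; rewrite ?tree_if_assoc; simpl; rewrite ?tree_if_leaves; reflexivity.
Qed.

Lemma FSCL_sound t u : FSCL_derives t u -> forall e, csem e t = csem e u.
Proof.
  induction 1; intro e; simpl; try congruence.
  rewrite !csem_subst.
  destruct H; simpl; rewrite ?tree_if_assoc; simpl; rewrite ?tree_if_leaves; reflexivity.
Qed.

Lemma cp1 (x y : cterm A) : FSCL_derives (CCond x (CT A) y) x.
Proof. exact (cd_ax (fun n => nth n [x; y] x) (CP1 A)). Qed.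
Lemma cp2 (x y : cterm A) : FSCL_derives (CCond x (CF A) y) y.
Proof. exact (cd_ax (fun n => nth n [x; y] x) (CP2 A)). Qed.
Lemma cp3 (x : cterm A) : FSCL_derives (CCond (CT A) x (CF A)) x.
Proof. exact (cd_ax (fun _ => x) (CP3 A)). Qed.
Lemma cp4 (x y z u v : cterm A) :
  FSCL_derives (CCond x (CCond y z u) v) (CCond (CCond x y v) z (CCond x u v)).
Proof. exact (cd_ax (fun n => nth n [x; y; z; u; v] x) (CP4 A)). Qed.
Lemma cneg_def (x : cterm A) : FSCL_derives (CNeg x) (CCond (CF A) x (CT A)).
Proof. exact (cd_ax (fun _ => x) (Def_neg A)). Qed.
Lemma cand_def (x y : cterm A) : FSCL_derives (CAnd x y) (CCond y x (CF A)).
Proof. exact (cd_ax (fun n => nth n [x; y] x) (Def_and A)). Qed.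
Lemma cor_def (x y : cterm A) : FSCL_derives (COr x y) (CCond (CT A) x y).
Proof. exact (cd_ax (fun n => nth n [x; y] x) (Def_or A)). Qed.

Fixpoint basic_form (t : tree) : cterm A :=
  match t with
  | Leaf true => CT A
  | Leaf false => CF A
  | Node a l r => CCond (basic_form l) (CAtom a) (basic_form r)
  end.

Lemma cond_basic_form p t q :
  FSCL_derives (CCond (basic_form p) (basic_form t) (basic_form q))
               (basic_form (tree_if t p q)).
Proof.
  induction t as [[]|a l IHl r IHr]; simpl.
  - apply cp1.
  - apply cp2.
  - eapply cd_trans; [apply cp4|]. apply cd_cond; auto using cd_refl.
Qed.

Lemma FSCL_basic_form e t : sclosed t -> FSCL_derives (embed t) (basic_form (ssem e t)).
Proof.
  induction t as [n| | |a|x IHx|x IHx y IHy|x IHx y IHy]; simpl; intro Ht.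
  - destruct Ht.
  - apply cd_refl.
  - apply cd_refl.
  - apply cd_sym, cp3.
  - eapply cd_trans; [apply cneg_def|]. eapply cd_trans; [|apply cond_basic_form].
    apply cd_cond; auto using cd_refl.
  - destruct Ht. eapply cd_trans; [apply cand_def|]. eapply cd_trans; [|apply cond_basic_form].
    apply cd_cond; auto using cd_refl.
  - destruct Ht. eapply cd_trans; [apply cor_def|]. eapply cd_trans; [|apply cond_basic_form].
    apply cd_cond; auto using cd_refl.
Qed.

Lemma FSCL_of_same_tree e P Q : sclosed P -> sclosed Q -> ssem e P = ssem e Q ->
  FSCL_derives (embed P) (embed Q).
Proof.
  intros HP HQ E. eapply cd_trans; [apply (FSCL_basic_form e), HP|].
  rewrite E. apply cd_sym, FSCL_basic_form, HQ.
Qed.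

(** * Equational reasoning in EqFSCL *)

Notation "x == y" := (@EqFSCL_derives A x y) (at level 70).
Notation T := (ST A).
Notation F := (SF A).

Lemma F_neg_T : F == SNeg T.
Proof. exact (sd_ax (fun _ => T) (F1 A)). Qed.
Lemma sor_def (x y : sterm A) : SOr x y == SNeg (SAnd (SNeg x) (SNeg y)).
Proof. exact (sd_ax (fun n => nth n [x; y] x) (F2 A)). Qed.
Lemma sneg_involutive (x : sterm A) : SNeg (SNeg x) == x.
Proof. exact (sd_ax (fun _ => x) (F3 A)). Qed.
Lemma sand_T_l (x : sterm A) : SAnd T x == x.
Proof. exact (sd_ax (fun _ => x) (F4 A)). Qed.
Lemma sor_F_r (x : sterm A) : SOr x F == x.
Proof. exact (sd_ax (fun _ => x) (F5 A)). Qed.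
Lemma sand_F_l (x : sterm A) : SAnd F x == F.
Proof. exact (sd_ax (fun _ => x) (F6 A)). Qed.
Lemma sand_assoc (x y z : sterm A) : SAnd (SAnd x y) z == SAnd x (SAnd y z).
Proof. exact (sd_ax (fun n => nth n [x; y; z] x) (F7 A)). Qed.
Lemma sand_neg_F (x : sterm A) : SAnd (SNeg x) F == SAnd x F.
Proof. exact (sd_ax (fun _ => x) (F8 A)). Qed.
Lemma sor_andF_l (x y : sterm A) : SOr (SAnd x F) y == SAnd (SOr x T) y.
Proof. exact (sd_ax (fun n => nth n [x; y] x) (F9 A)). Qed.
Lemma sor_andF_r_distr (x y z : sterm A) :
  SOr (SAnd x y) (SAnd z F) == SAnd (SOr x (SAnd z F)) (SOr y (SAnd z F)).
Proof. exact (sd_ax (fun n => nth n [x; y; z] x) (F10 A)). Qed.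

Lemma sneg_inj (x y : sterm A) : SNeg x == SNeg y -> x == y.
Proof. intro E. rewrite <- (sneg_involutive x), <- (sneg_involutive y), E. reflexivity. Qed.

Lemma sneg_F : SNeg F == T.
Proof. rewrite F_neg_T, sneg_involutive. reflexivity. Qed.
Lemma sneg_and (x y : sterm A) : SNeg (SAnd x y) == SOr (SNeg x) (SNeg y).
Proof. rewrite sor_def, !sneg_involutive. reflexivity. Qed.
Lemma sneg_or (x y : sterm A) : SNeg (SOr x y) == SAnd (SNeg x) (SNeg y).
Proof. rewrite sor_def, sneg_involutive. reflexivity. Qed.
Lemma sand_T_r (x : sterm A) : SAnd x T == x.
Proof.
  apply sneg_inj. rewrite <- (sor_F_r (SNeg x)), sor_def, sneg_involutive, sneg_F.
  reflexivity.
Qed.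
Lemma sor_T_l (x : sterm A) : SOr T x == T.
Proof. rewrite sor_def, <- F_neg_T, sand_F_l, sneg_F. reflexivity. Qed.
Lemma sor_assoc (x y z : sterm A) : SOr (SOr x y) z == SOr x (SOr y z).
Proof. rewrite !sor_def, !sneg_involutive, sand_assoc. reflexivity. Qed.
Lemma sor_neg_T (x : sterm A) : SOr (SNeg x) T == SOr x T.
Proof.
  apply sneg_inj. rewrite !sneg_or, sneg_involutive, <- F_neg_T, sand_neg_F. reflexivity.
Qed.
Lemma sand_orT_r_distr (x y z : sterm A) :
  SAnd (SOr x y) (SOr z T) == SOr (SAnd x (SOr z T)) (SAnd y (SOr z T)).
Proof.
  apply sneg_inj.
  rewrite sneg_and, !sneg_or, <- F_neg_T, sor_andF_r_distr, !sneg_and, sneg_or, <- F_neg_T.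
  reflexivity.
Qed.

(* Provable stand-ins for "x yields T (resp. F) under every valuation of the atoms". *)
Definition always_T (x : sterm A) := forall y, SOr x y == x.
Definition always_F (x : sterm A) := forall y, SAnd x y == x.

Lemma always_T_T : always_T T.
Proof. intro y. apply sor_T_l. Qed.
Lemma always_F_F : always_F F.
Proof. intro y. apply sand_F_l. Qed.
Lemma always_T_or x y : always_T y -> always_T (SOr x y).
Proof. intros Hy z. rewrite sor_assoc, (Hy z). reflexivity. Qed.
Lemma always_F_and x y : always_F y -> always_F (SAnd x y).
Proof. intros Hy z. rewrite sand_assoc, (Hy z). reflexivity. Qed.
Lemma always_T_neg x : always_T x -> always_F (SNeg x).
Proof. intros Hx y. rewrite <- (sneg_involutive y), <- sneg_or, (Hx (SNeg y)). reflexivity. Qed.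
Lemma always_F_neg x : always_F x -> always_T (SNeg x).
Proof. intros Hx y. rewrite <- (sneg_involutive y), <- sneg_and, (Hx (SNeg y)). reflexivity. Qed.

Lemma always_T_andF x : always_T x -> SAnd x F == SNeg x.
Proof. intro Hx. rewrite <- sand_neg_F. apply always_T_neg, Hx. Qed.
Lemma always_F_orT x : always_F x -> SOr x T == SNeg x.
Proof. intro Hx. rewrite <- sor_neg_T. apply always_F_neg, Hx. Qed.
Lemma always_T_eq x : always_T x -> x == SOr (SNeg x) T.
Proof.
  intro Hx. rewrite always_F_orT, sneg_involutive by (apply always_T_neg, Hx). reflexivity.
Qed.
Lemma always_F_eq x : always_F x -> x == SAnd (SNeg x) F.
Proof.
  intro Hx. rewrite always_T_andF, sneg_involutive by (apply always_F_neg, Hx). reflexivity.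
Qed.
Lemma always_F_sor x y : always_F x -> SOr x y == SAnd (SNeg x) y.
Proof.
  intro Hx. rewrite <- (Hx F) at 1. rewrite sor_andF_l, always_F_orT by exact Hx.
  reflexivity.
Qed.

Lemma sand_or_distr x y t : always_T t -> SAnd (SOr x y) t == SOr (SAnd x t) (SAnd y t).
Proof. intro Ht. rewrite <- (Ht T) at 1 2 3. apply sand_orT_r_distr. Qed.

Lemma sand_or_always_F x f t : always_F f -> always_T t ->
  SAnd (SOr x f) t == SOr (SAnd x t) f.
Proof. intros Hf Ht. rewrite sand_or_distr, (Hf t) by exact Ht. reflexivity. Qed.

Lemma sor_and_swap x t1 t2 : always_T t1 -> always_T t2 ->
  SOr (SAnd x t1) t2 == SOr (SAnd (SNeg x) t2) t1.
Proof.
  intros H1 H2.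
  rewrite (always_T_eq H2) at 1.
  rewrite <- sor_assoc, <- sor_neg_T, sneg_or, sneg_and, sneg_involutive.
  rewrite sand_or_always_F by auto using always_T_neg.
  rewrite sor_assoc, always_F_orT, sneg_involutive by (apply always_T_neg, H1).
  reflexivity.
Qed.

Lemma sand_or_swap x f1 f2 : always_F f1 -> always_F f2 ->
  SAnd (SOr (SNeg x) f1) f2 == SAnd (SOr x f2) f1.
Proof.
  intros H1 H2. apply sneg_inj.
  rewrite !sneg_and, !sneg_or, sneg_involutive, sor_and_swap by auto using always_F_neg.
  reflexivity.
Qed.

(** * Normal forms *)

Inductive Tterm : sterm A -> Prop :=
| Tterm_T : Tterm T
| Tterm_node a t1 t2 : Tterm t1 -> Tterm t2 -> Tterm (SOr (SAnd (SNeg (SAtom a)) t1) t2).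

Inductive Fterm : sterm A -> Prop :=
| Fterm_F : Fterm F
| Fterm_node a f1 f2 : Fterm f1 -> Fterm f2 -> Fterm (SAnd (SOr (SAtom a) f1) f2).

Inductive kind := Lit | Conj | Disj.

Lemma kind_eq_dec (k k' : kind) : {k = k'} + {k <> k'}.
Proof. decide equality. Qed.

Definition dual_kind k := match k with Lit => Lit | Conj => Disj | Disj => Conj end.

Inductive Sterm : kind -> nat -> sterm A -> Prop :=
| Slit_pos a t f : Tterm t -> Fterm f -> Sterm Lit 1 (SOr (SAnd (SAtom a) t) f)
| Slit_neg a t f : Tterm t -> Fterm f -> Sterm Lit 1 (SOr (SAnd (SNeg (SAtom a)) t) f)
| Sconj k1 k2 n1 n2 s d : Sterm k1 n1 s -> Sterm k2 n2 d -> k2 <> Conj ->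
    Sterm Conj (n1 + n2) (SAnd s d)
| Sdisj k1 k2 n1 n2 s c : Sterm k1 n1 s -> Sterm k2 n2 c -> k2 <> Disj ->
    Sterm Disj (n1 + n2) (SOr s c).

Definition normal_form (x : sterm A) :=
  Tterm x \/ Fterm x \/ exists t k n s, x = SAnd t s /\ Tterm t /\ Sterm k n s.

Lemma Tterm_always_T t : Tterm t -> always_T t.
Proof. induction 1; auto using always_T_T, always_T_or. Qed.
Lemma Fterm_always_F f : Fterm f -> always_F f.
Proof. induction 1; auto using always_F_F, always_F_and. Qed.

Lemma Sterm_literals_pos k n s : Sterm k n s -> 1 <= n.
Proof. induction 1; lia. Qed.

Lemma Tterm_neg t : Tterm t -> exists f, Fterm f /\ SNeg t == f.
Proof.
  induction 1 as [|a t1 t2 _ [f1 [Hf1 E1]] _ [f2 [Hf2 E2]]].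
  - exists F. split; [constructor|]. symmetry; apply F_neg_T.
  - exists (SAnd (SOr (SAtom a) f1) f2). split; [constructor; auto|].
    rewrite sneg_or, sneg_and, sneg_involutive, E1, E2. reflexivity.
Qed.

Lemma Fterm_neg f : Fterm f -> exists t, Tterm t /\ SNeg f == t.
Proof.
  induction 1 as [|a f1 f2 _ [t1 [Ht1 E1]] _ [t2 [Ht2 E2]]].
  - exists T. split; [constructor|]. apply sneg_F.
  - exists (SOr (SAnd (SNeg (SAtom a)) t1) t2). split; [constructor; auto|].
    rewrite sneg_and, sneg_or, E1, E2. reflexivity.
Qed.

Lemma Tterm_and t t' : Tterm t -> Tterm t' -> exists u, Tterm u /\ SAnd t t' == u.
Proof.
  intros Ht Ht'. induction Ht as [|a t1 t2 H1 [u1 [Hu1 E1]] H2 [u2 [Hu2 E2]]].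
  - exists t'. split; [exact Ht'|]. apply sand_T_l.
  - exists (SOr (SAnd (SNeg (SAtom a)) u1) u2). split; [constructor; auto|].
    rewrite sand_or_distr, sand_assoc, E1, E2 by (apply Tterm_always_T; exact Ht').
    reflexivity.
Qed.

(* An F-term f equals (SNeg f) /\o F, and SNeg f is a T-term: conjunction with f reduces
   to conjunction with a T-term. *)
Lemma Tterm_and_Fterm t f : Tterm t -> Fterm f -> exists u, Fterm u /\ SAnd t f == u.
Proof.
  intros Ht Hf.
  destruct (Fterm_neg Hf) as [t1 [Ht1 E1]].
  destruct (Tterm_and Ht Ht1) as [t2 [Ht2 E2]].
  destruct (Tterm_neg Ht2) as [f' [Hf' E']].
  exists f'. split; [exact Hf'|].
  rewrite (always_F_eq (Fterm_always_F Hf)), <- sand_assoc, E1, E2,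
    always_T_andF by (apply Tterm_always_T; exact Ht2).
  exact E'.
Qed.

Lemma Sterm_neg k n s : Sterm k n s -> exists s', Sterm (dual_kind k) n s' /\ SNeg s == s'.
Proof.
  induction 1 as [a t f Ht Hf|a t f Ht Hf
                 |k1 k2 n1 n2 s d _ [s' [Hs' E1]] _ [d' [Hd' E2]] Hk
                 |k1 k2 n1 n2 s c _ [s' [Hs' E1]] _ [c' [Hc' E2]] Hk].
  - destruct (Tterm_neg Ht) as [f' [Hf' Ef]]. destruct (Fterm_neg Hf) as [t' [Ht' Et]].
    exists (SOr (SAnd (SNeg (SAtom a)) t') f'). split; [constructor; auto|].
    rewrite sneg_or, sneg_and, sand_or_always_F, Ef, Et
      by auto using always_T_neg, always_F_neg, Tterm_always_T, Fterm_always_F.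
    reflexivity.
  - destruct (Tterm_neg Ht) as [f' [Hf' Ef]]. destruct (Fterm_neg Hf) as [t' [Ht' Et]].
    exists (SOr (SAnd (SAtom a) t') f'). split; [constructor; auto|].
    rewrite sneg_or, sneg_and, sneg_involutive, sand_or_always_F, Ef, Et
      by auto using always_T_neg, always_F_neg, Tterm_always_T, Fterm_always_F.
    reflexivity.
  - exists (SOr s' d'). split.
    + econstructor; eauto. destruct k2; simpl; congruence.
    + rewrite sneg_and, E1, E2. reflexivity.
  - exists (SAnd s' c'). split.
    + econstructor; eauto. destruct k2; simpl; congruence.
    + rewrite sneg_or, E1, E2. reflexivity.
Qed.

Lemma Sterm_and_Tterm k n s t : Sterm k n s -> Tterm t ->
  exists s', Sterm k n s' /\ SAnd s t == s'.
Proof.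
  intros Hs Ht. pose proof (Tterm_always_T Ht) as HtT.
  induction Hs as [a t0 f Ht0 Hf|a t0 f Ht0 Hf
                  |k1 k2 n1 n2 s d H1 _ H2 [d' [Hd' E2]] Hk
                  |k1 k2 n1 n2 s c H1 [s' [Hs' E1]] H2 [c' [Hc' E2]] Hk].
  - destruct (Tterm_and Ht0 Ht) as [u [Hu Eu]].
    exists (SOr (SAnd (SAtom a) u) f). split; [constructor; auto|].
    rewrite sand_or_distr, sand_assoc, Eu, (Fterm_always_F Hf t) by exact HtT. reflexivity.
  - destruct (Tterm_and Ht0 Ht) as [u [Hu Eu]].
    exists (SOr (SAnd (SNeg (SAtom a)) u) f). split; [constructor; auto|].
    rewrite sand_or_distr, sand_assoc, Eu, (Fterm_always_F Hf t) by exact HtT. reflexivity.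
  - exists (SAnd s d'). split; [econstructor; eauto|]. rewrite sand_assoc, E2. reflexivity.
  - exists (SOr s' c'). split; [econstructor; eauto|].
    rewrite sand_or_distr, E1, E2 by exact HtT. reflexivity.
Qed.

Lemma Sterm_and_Fterm_of_andF n :
  (forall k s, Sterm k n s -> exists f, Fterm f /\ SAnd s F == f) ->
  forall k s f, Sterm k n s -> Fterm f -> exists f', Fterm f' /\ SAnd s f == f'.
Proof.
  intros HF k s f Hs Hf.
  destruct (Fterm_neg Hf) as [t [Ht Et]].
  destruct (Sterm_and_Tterm Hs Ht) as [s' [Hs' Es]].
  destruct (HF _ _ Hs') as [f' [Hf' Ef]].
  exists f'. split; [exact Hf'|].
  rewrite (always_F_eq (Fterm_always_F Hf)), <- sand_assoc, Et, Es. exact Ef.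
Qed.

(* Well-founded induction on the number of literals: the disjunctive case recurses on
   the duals of the arguments, which are not subterms. *)
Lemma Sterm_andF k n s : Sterm k n s -> exists f, Fterm f /\ SAnd s F == f.
Proof.
  revert k s. induction n as [n IH] using (well_founded_induction lt_wf).
  intros k s Hs.
  inversion Hs as [a t f Ht Hf|a t f Ht Hf|k1 k2 n1 n2 s1 d H1 H2 Hk
                 |k1 k2 n1 n2 s1 c H1 H2 Hk]; subst.
  - destruct (Tterm_neg Ht) as [f' [Hf' Ef]].
    exists (SAnd (SOr (SAtom a) f) f'). split; [constructor; auto|].
    rewrite <- sand_or_always_F, sand_assoc, always_T_andF, Ef
      by auto using Tterm_always_T, Fterm_always_F.
    reflexivity.
  - destruct (Tterm_neg Ht) as [f' [Hf' Ef]].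
    exists (SAnd (SOr (SAtom a) f') f). split; [constructor; auto|].
    rewrite <- sand_or_always_F, sand_assoc, always_T_andF, Ef
      by auto using Tterm_always_T, Fterm_always_F.
    apply sand_or_swap; auto using Fterm_always_F.
  - pose proof (Sterm_literals_pos H1). pose proof (Sterm_literals_pos H2).
    destruct (IH n2 ltac:(lia) _ _ H2) as [f1 [Hf1 E1]].
    destruct (Sterm_and_Fterm_of_andF (IH n1 ltac:(lia)) H1 Hf1) as [f2 [Hf2 E2]].
    exists f2. split; [exact Hf2|]. rewrite sand_assoc, E1. exact E2.
  - pose proof (Sterm_literals_pos H1). pose proof (Sterm_literals_pos H2).
    destruct (Sterm_neg H2) as [c' [Hc' Ec]].
    destruct (IH n2 ltac:(lia) _ _ Hc') as [f1 [Hf1 E1]].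
    destruct (Sterm_neg H1) as [s' [Hs' Es]].
    destruct (Sterm_and_Fterm_of_andF (IH n1 ltac:(lia)) Hs' Hf1) as [f2 [Hf2 E2]].
    exists f2. split; [exact Hf2|].
    rewrite <- sand_neg_F, sneg_or, sand_assoc, Ec, E1, Es. exact E2.
Qed.

Lemma Sterm_and_Fterm k n s f : Sterm k n s -> Fterm f ->
  exists f', Fterm f' /\ SAnd s f == f'.
Proof. intros. eapply Sterm_and_Fterm_of_andF; eauto using Sterm_andF. Qed.

Lemma Sterm_and k n s k' n' s' : Sterm k n s -> Sterm k' n' s' ->
  exists k'' n'' s'', Sterm k'' n'' s'' /\ SAnd s s' == s''.
Proof.
  intros Hs Hs'. revert k n s Hs.
  induction Hs' as [a t f Ht Hf|a t f Ht Hf|k1 k2 n1 n2 s1 d H1 IH1 H2 _ Hk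
                   |k1 k2 n1 n2 s1 c H1 _ H2 _ Hk]; intros k n s Hs.
  - do 3 eexists. split; [|reflexivity].
    eapply Sconj; [eauto|apply Slit_pos; eauto|discriminate].
  - do 3 eexists. split; [|reflexivity].
    eapply Sconj; [eauto|apply Slit_neg; eauto|discriminate].
  - destruct (IH1 _ _ _ Hs) as [k3 [n3 [s3 [Hs3 E3]]]].
    exists Conj, (n3 + n2), (SAnd s3 d). split; [eapply Sconj; eauto|].
    rewrite <- sand_assoc, E3. reflexivity.
  - exists Conj, (n + (n1 + n2)), (SAnd s (SOr s1 c)). split; [|reflexivity].
    eapply Sconj; [eauto|eapply Sdisj; eauto|discriminate].
Qed.

Lemma normal_form_and x y : normal_form x -> normal_form y ->
  exists z, normal_form z /\ SAnd x y == z.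
Proof.
  unfold normal_form.
  intros [Hx|[Hx|[t [k [n [s [-> [Ht Hs]]]]]]]] [Hy|[Hy|[t' [k' [n' [s' [-> [Ht' Hs']]]]]]]].
  - destruct (Tterm_and Hx Hy) as [u [Hu E]]. exists u. split; auto.
  - destruct (Tterm_and_Fterm Hx Hy) as [u [Hu E]]. exists u. split; auto.
  - destruct (Tterm_and Hx Ht') as [u [Hu E]]. exists (SAnd u s'). split.
    + right; right; eauto 8.
    + rewrite <- sand_assoc, E. reflexivity.
  - exists x. split; auto. apply Fterm_always_F, Hx.
  - exists x. split; auto. apply Fterm_always_F, Hx.
  - exists x. split; auto. apply Fterm_always_F, Hx.
  - destruct (Sterm_and_Tterm Hs Hy) as [u [Hu E]]. exists (SAnd t u). split.
    + right; right; eauto 8.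
    + rewrite sand_assoc, E. reflexivity.
  - destruct (Sterm_and_Fterm Hs Hy) as [u [Hu E]].
    destruct (Tterm_and_Fterm Ht Hu) as [v [Hv E']].
    exists v. split; auto. rewrite sand_assoc, E, E'. reflexivity.
  - destruct (Sterm_and_Tterm Hs Ht') as [u [Hu E]].
    destruct (Sterm_and Hu Hs') as [k3 [n3 [s3 [Hs3 E3]]]].
    exists (SAnd t s3). split.
    + right; right; eauto 8.
    + rewrite sand_assoc, <- (sand_assoc s), E, E3. reflexivity.
Qed.

Lemma normal_form_neg x : normal_form x -> exists z, normal_form z /\ SNeg x == z.
Proof.
  unfold normal_form. intros [Hx|[Hx|[t [k [n [s [-> [Ht Hs]]]]]]]].
  - destruct (Tterm_neg Hx) as [u [Hu E]]. exists u. split; auto.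
  - destruct (Fterm_neg Hx) as [u [Hu E]]. exists u. split; auto.
  - destruct (Sterm_neg Hs) as [s' [Hs' E]]. exists (SAnd t s'). split.
    + right; right; eauto 8.
    + rewrite sneg_and, always_F_sor, sneg_involutive, E
        by (apply always_T_neg, Tterm_always_T, Ht).
      reflexivity.
Qed.

Lemma closed_normal_form P : sclosed P -> exists N, normal_form N /\ P == N.
Proof.
  unfold normal_form.
  induction P as [n| | |a|x IHx|x IHx y IHy|x IHx y IHy]; simpl; intro HP.
  - destruct HP.
  - exists T. split; [left; constructor|reflexivity].
  - exists F. split; [right; left; constructor|reflexivity].
  - exists (SAnd T (SOr (SAnd (SAtom a) T) F)). split.
    + right; right. do 4 eexists. split; [reflexivity|].
      split; [constructor|]. apply Slit_pos; constructor.
    + rewrite sand_T_l, sor_F_r, sand_T_r. reflexivity.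
  - destruct (IHx HP) as [N [HN E]]. destruct (normal_form_neg HN) as [z [Hz Ez]].
    exists z. split; auto. rewrite E. exact Ez.
  - destruct HP as [Hx Hy].
    destruct (IHx Hx) as [N1 [HN1 E1]]. destruct (IHy Hy) as [N2 [HN2 E2]].
    destruct (normal_form_and HN1 HN2) as [z [Hz Ez]].
    exists z. split; auto. rewrite E1, E2. exact Ez.
  - destruct HP as [Hx Hy].
    destruct (IHx Hx) as [N1 [HN1 E1]]. destruct (IHy Hy) as [N2 [HN2 E2]].
    destruct (normal_form_neg HN1) as [M1 [HM1 E1']].
    destruct (normal_form_neg HN2) as [M2 [HM2 E2']].
    destruct (normal_form_and HM1 HM2) as [z [Hz Ez]].
    destruct (normal_form_neg Hz) as [w [Hw Ew]].
    exists w. split; auto. rewrite sor_def, E1, E2, E1', E2', Ez. exact Ew.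
Qed.

(** * Grafting *)

Fixpoint graft (b : bool) (t c : tree) : tree :=
  match t with
  | Leaf b' => if Bool.eqb b' b then c else Leaf b'
  | Node a l r => Node a (graft b l c) (graft b r c)
  end.

Fixpoint has_leaf (b : bool) (t : tree) : Prop :=
  match t with Leaf b' => b' = b | Node _ l r => has_leaf b l \/ has_leaf b r end.

Fixpoint all_leaves (b : bool) (t : tree) : Prop :=
  match t with Leaf b' => b' = b | Node _ l r => all_leaves b l /\ all_leaves b r end.

Definition mixed t := has_leaf true t /\ has_leaf false t.

Fixpoint leaf_count (b : bool) (t : tree) : nat :=
  match t with
  | Leaf b' => if Bool.eqb b' b then 1 else 0
  | Node _ l r => leaf_count b l + leaf_count b r
  end.

Fixpoint tsize (t : tree) : nat :=
  match t with Leaf _ => 1 | Node _ l r => S (tsize l + tsize r) end.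

Definition proportional x y :=
  leaf_count false x * leaf_count true y = leaf_count false y * leaf_count true x.

Definition skew t := exists a l r, t = Node a l r /\ ~ proportional l r.

(* [covers b t u]: t is [graft b x u] for a tree x whose leaves other than b are kept. *)
Fixpoint covers (b : bool) (t u : tree) : Prop :=
  t = u \/ match t with Leaf b' => b' <> b | Node _ l r => covers b l u /\ covers b r u end.

Fixpoint tiled (t u : tree) : Prop :=
  t = u \/ match t with Leaf _ => False | Node _ l r => tiled l u /\ tiled r u end.

Definition graft_irreducible b t := forall u, mixed u -> covers b t u -> u = t.

Lemma tree_if_graft_true x y : tree_if x y (Leaf false) = graft true x y.
Proof. induction x as [[]|a l IHl r IHr]; simpl; congruence. Qed.
Lemma tree_if_graft_false x y : tree_if x (Leaf true) y = graft false x y.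
Proof. induction x as [[]|a l IHl r IHr]; simpl; congruence. Qed.

Lemma graft_leaf b c : graft b (Leaf b) c = c.
Proof. simpl. rewrite Bool.eqb_reflx. reflexivity. Qed.

Lemma all_leaves_has b b' t : all_leaves b t -> has_leaf b' t -> b' = b.
Proof. induction t as [b0|a l IHl r IHr]; simpl; [congruence|tauto]. Qed.

Lemma all_leaves_has_leaf b t : all_leaves b t -> has_leaf b t.
Proof. induction t; simpl; tauto. Qed.

Lemma has_leaf_or_all b t : has_leaf b t \/ all_leaves (negb b) t.
Proof. induction t as [b'|a l IHl r IHr]; simpl; [destruct b, b'; auto|tauto]. Qed.

Lemma mixed_has_leaf b t : mixed t -> has_leaf b t.
Proof. destruct b; intros []; assumption. Qed.

Lemma mixed_not_all b t : mixed t -> ~ all_leaves b t.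
Proof.
  intros Ht Hall. apply (Bool.no_fixpoint_negb b).
  exact (all_leaves_has Hall (mixed_has_leaf (negb b) Ht)).
Qed.

Lemma leaf_not_mixed b : ~ mixed (Leaf b).
Proof. intros [Ht Hf]. simpl in *. congruence. Qed.

Lemma graft_id b y c : all_leaves (negb b) y -> graft b y c = y.
Proof.
  induction y as [b'|a l IHl r IHr]; simpl.
  - intros ->. destruct b; reflexivity.
  - intros [Hl Hr]. rewrite IHl, IHr; auto.
Qed.

Lemma graft_size_le b y c : has_leaf b y -> tsize c <= tsize (graft b y c).
Proof.
  induction y as [b'|a l IHl r IHr]; simpl; intro H.
  - subst. rewrite Bool.eqb_reflx. lia.
  - destruct H; [specialize (IHl H)|specialize (IHr H)]; lia.
Qed.

Lemma graft_not_larger b y c : has_leaf b y -> tsize (graft b y c) <= tsize c -> y = Leaf b.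
Proof.
  destruct y as [b'|a l r]; simpl; intros H Hs.
  - congruence.
  - exfalso. destruct H as [H|H]; pose proof (graft_size_le c H); lia.
Qed.

Lemma graft_eq_self b y c : mixed c -> graft b y c = c -> y = Leaf b.
Proof.
  intros Hc E. destruct (has_leaf_or_all b y) as [H|H].
  - apply graft_not_larger with c; [exact H|]. rewrite E. lia.
  - rewrite graft_id in E by exact H. subst. exfalso. exact (mixed_not_all Hc H).
Qed.

Lemma has_leaf_graft b b' z c : has_leaf b z -> has_leaf b' c -> has_leaf b' (graft b z c).
Proof.
  induction z as [b0|a l IHl r IHr]; simpl; intros H1 H2.
  - subst. rewrite Bool.eqb_reflx. exact H2.
  - tauto.
Qed.

Lemma has_leaf_graft_other b z c : mixed c -> has_leaf (negb b) (graft b z c).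
Proof.
  intro Hc. destruct (has_leaf_or_all b z) as [H|H].
  - apply has_leaf_graft; [exact H|apply mixed_has_leaf, Hc].
  - rewrite graft_id by exact H. apply all_leaves_has_leaf, H.
Qed.

Lemma mixed_graft b z c : mixed z -> mixed c -> mixed (graft b z c).
Proof.
  intros Hz Hc. pose proof (has_leaf_graft_other b z Hc) as Hnb.
  pose proof (has_leaf_graft (b' := b) (mixed_has_leaf b Hz) (mixed_has_leaf b Hc)).
  destruct b; split; assumption.
Qed.

Lemma graft_not_all b z c : mixed c -> ~ all_leaves b (graft b z c).
Proof.
  intros Hc H. apply (Bool.no_fixpoint_negb b).
  exact (all_leaves_has H (has_leaf_graft_other b z Hc)).
Qed.

Lemma graft_inj b y1 y2 c : mixed c -> graft b y1 c = graft b y2 c -> y1 = y2.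
Proof.
  intro Hc. revert y2. induction y1 as [b1|a l IHl r IHr]; intros y2 E.
  - destruct (Bool.eqb b1 b) eqn:Eb.
    + apply Bool.eqb_prop in Eb. subst b1. rewrite graft_leaf in E.
      symmetry. exact (graft_eq_self Hc (eq_sym E)).
    + destruct y2 as [b2|a2 l2 r2]; simpl in E; rewrite Eb in E; [|discriminate].
      destruct (Bool.eqb b2 b); [|exact E].
      subst c. exfalso. exact (leaf_not_mixed Hc).
  - destruct y2 as [b2|a2 l2 r2].
    + simpl in E. destruct (Bool.eqb b2 b) eqn:Eb; [|discriminate].
      apply Bool.eqb_prop in Eb. subst b2.
      discriminate (graft_eq_self (y := Node a l r) Hc E).
    + simpl in E. injection E as -> El Er. f_equal; auto.
Qed.

Lemma leaf_count_graft b x z c :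
  leaf_count x (graft b z c) =
  (if Bool.eqb x b then 0 else leaf_count x z) + leaf_count b z * leaf_count x c.
Proof.
  induction z as [b'|a l IHl r IHr]; simpl.
  - destruct b, b', x; simpl; lia.
  - rewrite IHl, IHr. destruct (Bool.eqb x b); lia.
Qed.

Lemma has_leaf_count b t : has_leaf b t -> 1 <= leaf_count b t.
Proof.
  induction t as [b'|a l IHl r IHr]; simpl.
  - intros ->. rewrite Bool.eqb_reflx. lia.
  - intros [H|H]; [specialize (IHl H)|specialize (IHr H)]; lia.
Qed.

Lemma all_leaves_count b t : all_leaves b t -> leaf_count (negb b) t = 0.
Proof.
  induction t as [b'|a l IHl r IHr]; simpl.
  - intros ->. destruct b; reflexivity.
  - intros [H1 H2]. rewrite IHl, IHr; auto.
Qed.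

(* Grafting a mixed tree multiplies the leaf counts of both branches by the same
   affine map, which preserves (non-)proportionality. *)
Lemma proportional_graft b l r c : mixed c ->
  proportional (graft b l c) (graft b r c) -> proportional l r.
Proof.
  unfold proportional. intros Hc H. rewrite !leaf_count_graft in H.
  pose proof (has_leaf_count (mixed_has_leaf true Hc)).
  pose proof (has_leaf_count (mixed_has_leaf false Hc)).
  destruct b; simpl in H.
  - apply (Nat.mul_cancel_l _ _ (leaf_count true c)); [lia|]. nia.
  - apply (Nat.mul_cancel_l _ _ (leaf_count false c)); [lia|]. nia.
Qed.

Lemma skew_graft b S c : skew S -> mixed c -> skew (graft b S c).
Proof.
  intros [a [l [r [-> Hlr]]]] Hc. exists a, (graft b l c), (graft b r c).
  split; [reflexivity|]. intro H. exact (Hlr (proportional_graft Hc H)).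
Qed.

Lemma tiled_refl t : tiled t t.
Proof. destruct t; left; reflexivity. Qed.

Lemma tiled_leaf_counts x y : tiled x y -> exists k, forall b, leaf_count b x = k * leaf_count b y.
Proof.
  induction x as [b'|a l IHl r IHr]; simpl.
  - intros [<-|[]]. exists 1. intro. symmetry. apply Nat.mul_1_l.
  - intros [<-|[H1 H2]].
    + exists 1. intro. symmetry. apply Nat.mul_1_l.
    + destruct (IHl H1) as [k1 E1]. destruct (IHr H2) as [k2 E2].
      exists (k1 + k2). intro b. rewrite E1, E2. lia.
Qed.

Lemma tiled_proportional l r y : tiled l y -> tiled r y -> proportional l r.
Proof.
  intros H1 H2. destruct (tiled_leaf_counts H1) as [k1 E1].
  destruct (tiled_leaf_counts H2) as [k2 E2].
  unfold proportional. rewrite !E1, !E2. ring.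
Qed.

Lemma tiled_leaf l b : tiled l (Leaf b) -> all_leaves b l.
Proof.
  induction l as [b'|a l1 IH1 r1 IH2]; simpl.
  - intros [H|[]]. congruence.
  - intros [H|[H1 H2]]; [discriminate|auto].
Qed.

Lemma graft_all_tiled b X s : all_leaves b X -> tiled (graft b X s) s.
Proof.
  induction X as [b'|a l IHl r IHr]; simpl.
  - intros ->. rewrite Bool.eqb_reflx. apply tiled_refl.
  - intros [H1 H2]. right; auto.
Qed.

Lemma covers_size b t u : covers b t u -> has_leaf b t -> tsize u <= tsize t.
Proof.
  induction t as [b'|a l IHl r IHr]; simpl.
  - intros [<-|H] H'; [auto|congruence].
  - intros [<-|[H1 H2]] H; [auto|].
    destruct H; [specialize (IHl H1 H)|specialize (IHr H2 H)]; lia.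
Qed.

Lemma covers_all_leaves b t u : covers b t u -> all_leaves b t -> all_leaves b u.
Proof.
  induction t as [b'|a l IHl r IHr]; simpl.
  - intros [<-|H] H'; [simpl; auto|congruence].
  - intros [<-|[H1 H2]] H; simpl; tauto.
Qed.

Lemma covers_graft b x d : covers b (graft b x d) d.
Proof.
  induction x as [b'|a l IHl r IHr]; simpl.
  - destruct (Bool.eqb b' b) eqn:E.
    + destruct d; left; reflexivity.
    + right. intros ->. rewrite Bool.eqb_reflx in E. discriminate.
  - right; auto.
Qed.

Lemma graft_small b l y u c : u = graft b y c -> tiled l y -> mixed u -> mixed c ->
  tsize u <= tsize c -> all_leaves b l /\ u = c.
Proof.
  intros Eu Hl Hu Hc Hs. destruct (has_leaf_or_all b y) as [H|H].
  - assert (y = Leaf b) as -> by (apply graft_not_larger with c; congruence).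
    rewrite graft_leaf in Eu. split; [apply tiled_leaf, Hl|exact Eu].
  - exfalso. rewrite graft_id in Eu by exact H. subst u. exact (mixed_not_all Hu H).
Qed.

Lemma covers_graft_cases b c x u : covers (negb b) (graft b x c) u -> mixed u -> mixed c ->
  (exists y, u = graft b y c /\ tiled x y) \/ (all_leaves b x /\ tsize u <= tsize c).
Proof.
  intros Hcov Hu Hc. induction x as [b'|a l IHl r IHr].
  - simpl in Hcov. destruct (Bool.eqb b' b) eqn:E.
    + apply Bool.eqb_prop in E. subst b'. right. split; [reflexivity|].
      apply covers_size with (negb b); [exact Hcov|apply mixed_has_leaf, Hc].
    + exfalso. destruct Hcov as [<-|H]; [exact (leaf_not_mixed Hu)|].
      destruct b, b'; simpl in *; congruence.
  - simpl in Hcov. destruct Hcov as [E|[C1 C2]].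
    + left. exists (Node a l r). split; [symmetry; exact E|apply tiled_refl].
    + destruct (IHl C1) as [[yl [El Fl]]|[Al Sl]];
        destruct (IHr C2) as [[yr [Er Fr]]|[Ar Sr]].
      * left. exists yl. split; [exact El|].
        assert (yl = yr) as <- by (apply graft_inj with b c; [exact Hc|congruence]).
        right; split; assumption.
      * destruct (graft_small El Fl Hu Hc Sr) as [Al ->]. right. simpl; auto.
      * destruct (graft_small Er Fr Hu Hc Sl) as [Ar ->]. right. simpl; auto.
      * right. simpl; auto.
Qed.

Lemma graft_skew_irreducible b S c : skew S -> mixed S -> mixed c ->
  graft_irreducible (negb b) (graft b S c).
Proof.
  intros [a [l [r [-> Hlr]]]] HS Hc u Hu Hcov.
  destruct (covers_graft_cases Hcov Hu Hc) as [[y [-> Hy]]|[Hall _]].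
  - destruct Hy as [<-|[Hl Hr]]; [reflexivity|].
    exfalso. exact (Hlr (tiled_proportional Hl Hr)).
  - exfalso. exact (mixed_not_all HS Hall).
Qed.

Lemma covers_graft_irreducible b d x u : graft_irreducible b d ->
  covers b (graft b x d) u -> mixed u -> has_leaf b x ->
  exists y, u = graft b y d /\ has_leaf b y.
Proof.
  intro Hd. induction x as [b'|a l IHl r IHr]; intros Hcov Hu Hx.
  - simpl in Hx. subst b'. rewrite graft_leaf in Hcov.
    exists (Leaf b). rewrite graft_leaf. split; [exact (Hd u Hu Hcov)|reflexivity].
  - destruct Hcov as [E|[C1 C2]].
    + exists (Node a l r). split; [symmetry; exact E|exact Hx].
    + destruct Hx as [H|H]; [apply IHl|apply IHr]; assumption.
Qed.

Lemma graft_irreducible_inj b S1 S1' d d' : mixed S1 -> mixed S1' -> mixed d -> mixed d' ->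
  graft_irreducible b d -> graft_irreducible b d' ->
  graft b S1 d = graft b S1' d' -> S1 = S1' /\ d = d'.
Proof.
  intros H1 H1' Hd Hd' K K' E.
  pose proof (covers_graft b S1' d') as C'. rewrite <- E in C'.
  destruct (covers_graft_irreducible K C' Hd' (mixed_has_leaf b H1)) as [y [Ey Hy]].
  pose proof (covers_graft b S1 d) as C. rewrite E in C.
  destruct (covers_graft_irreducible K' C Hd (mixed_has_leaf b H1')) as [y' [Ey' Hy']].
  pose proof (graft_size_le d Hy). pose proof (graft_size_le d' Hy').
  rewrite <- Ey in *. rewrite <- Ey' in *.
  assert (y = Leaf b) as -> by (apply graft_not_larger with d; [exact Hy|rewrite <- Ey; lia]).
  rewrite graft_leaf in Ey. subst d'.
  split; [apply graft_inj with b d; assumption|reflexivity].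
Qed.

Lemma graft_not_irreducible b S1 d : mixed S1 -> mixed d -> ~ graft_irreducible b (graft b S1 d).
Proof.
  intros H1 Hd K. pose proof (K d Hd (covers_graft b S1 d)) as E.
  rewrite <- (graft_leaf b d) in E at 1. apply graft_inj in E; [|exact Hd].
  subst S1. exact (leaf_not_mixed H1).
Qed.

Lemma literal_not_graft b b' a X Y S1 d : mixed S1 -> mixed d ->
  all_leaves b' X -> all_leaves (negb b') Y -> Node a X Y <> graft b S1 d.
Proof.
  intros H1 Hd HX HY E. destruct S1 as [b1|a1 l r]; [exact (leaf_not_mixed H1)|].
  simpl in E. injection E as _ -> ->.
  destruct b, b'; simpl in *; solve [exact (graft_not_all Hd HX) | exact (graft_not_all Hd HY)].
Qed.

Lemma graft_uniform_skew_inj X X' s s' : all_leaves true X -> all_leaves true X' ->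
  skew s -> skew s' -> graft true X s = graft true X' s' -> X = X' /\ s = s'.
Proof.
  revert X'. induction X as [b|a l IHl r IHr]; intros X' HX HX' Hs Hs' E.
  - simpl in HX. subst b. rewrite graft_leaf in E. destruct X' as [b'|a' l' r'].
    + simpl in HX'. subst b'. rewrite graft_leaf in E. auto.
    + exfalso. destruct Hs as [a0 [l0 [r0 [-> Hlr]]]]. simpl in E.
      injection E as _ -> ->. destruct HX'.
      apply Hlr, tiled_proportional with s'; apply graft_all_tiled; assumption.
  - destruct X' as [b'|a' l' r'].
    + exfalso. simpl in HX'. subst b'. rewrite graft_leaf in E.
      destruct Hs' as [a0 [l0 [r0 [-> Hlr]]]]. simpl in E.
      injection E as _ <- <-. destruct HX.
      apply Hlr, tiled_proportional with s; apply graft_all_tiled; assumption.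
    + simpl in E. injection E as -> El Er. destruct HX, HX'.
      destruct (IHl l'); auto. destruct (IHr r'); auto. subst; auto.
Qed.

(** * Trees of normal forms *)

Lemma literal_mixed b a X Y : all_leaves b X -> all_leaves (negb b) Y -> mixed (Node a X Y).
Proof.
  intros HX HY. pose proof (all_leaves_has_leaf HX). pose proof (all_leaves_has_leaf HY).
  destruct b; split; simpl; auto.
Qed.

Lemma literal_skew b a X Y : all_leaves b X -> all_leaves (negb b) Y -> skew (Node a X Y).
Proof.
  intros HX HY. exists a, X, Y. split; [reflexivity|]. unfold proportional.
  pose proof (all_leaves_count HX). pose proof (has_leaf_count (all_leaves_has_leaf HX)).
  pose proof (all_leaves_count HY). pose proof (has_leaf_count (all_leaves_has_leaf HY)).
  rewrite Bool.negb_involutive in *. destruct b; simpl in *; nia.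
Qed.

Lemma literal_irreducible b b' a X Y : all_leaves b X -> all_leaves (negb b) Y ->
  graft_irreducible b' (Node a X Y).
Proof.
  intros HX HY u Hu [E|[CX CY]]; [symmetry; exact E|exfalso].
  destruct (Bool.bool_dec b b') as [<-|Hb].
  - exact (mixed_not_all Hu (covers_all_leaves CX HX)).
  - replace b' with (negb b) in CY by (destruct b, b'; simpl; congruence).
    exact (mixed_not_all Hu (covers_all_leaves CY HY)).
Qed.

Lemma all_leaves_unique b b' t : all_leaves b t -> all_leaves b' t -> b = b'.
Proof. intros H H'. symmetry. exact (all_leaves_has H (all_leaves_has_leaf H')). Qed.

(* Closed terms have the same tree under every valuation; we fix one. *)
Definition ev0 : nat -> tree := fun _ => Leaf true.
Notation tree_of := (ssem ev0).

Lemma tree_if_all_true x q : all_leaves true x -> tree_if x (Leaf true) q = x.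
Proof.
  induction x as [b|a l IHl r IHr]; simpl; [intros ->; reflexivity|].
  intros [Hl Hr]. f_equal; auto.
Qed.

Lemma tree_if_all_false x p : all_leaves false x -> tree_if x p (Leaf false) = x.
Proof.
  induction x as [b|a l IHl r IHr]; simpl; [intros ->; reflexivity|].
  intros [Hl Hr]. f_equal; auto.
Qed.

Lemma tree_of_sand x y : tree_of (SAnd x y) = graft true (tree_of x) (tree_of y).
Proof. apply tree_if_graft_true. Qed.
Lemma tree_of_sor x y : tree_of (SOr x y) = graft false (tree_of x) (tree_of y).
Proof. apply tree_if_graft_false. Qed.

Lemma tree_of_neg_literal a t u : all_leaves true (tree_of t) ->
  tree_of (SOr (SAnd (SNeg (SAtom a)) t) u) = Node a (tree_of u) (tree_of t).
Proof. intro H. simpl. rewrite tree_if_all_true by exact H. reflexivity. Qed.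
Lemma tree_of_pos_literal a t u : all_leaves true (tree_of t) ->
  tree_of (SOr (SAnd (SAtom a) t) u) = Node a (tree_of t) (tree_of u).
Proof. intro H. simpl. rewrite tree_if_all_true by exact H. reflexivity. Qed.
Lemma tree_of_Fterm_node a f1 f2 : all_leaves false (tree_of f1) ->
  tree_of (SAnd (SOr (SAtom a) f1) f2) = Node a (tree_of f2) (tree_of f1).
Proof. intro H. simpl. rewrite tree_if_all_false by exact H. reflexivity. Qed.

Lemma Tterm_all_true t : Tterm t -> all_leaves true (tree_of t).
Proof.
  induction 1; [reflexivity|]. rewrite tree_of_neg_literal by assumption. split; assumption.
Qed.
Lemma Fterm_all_false f : Fterm f -> all_leaves false (tree_of f).
Proof.
  induction 1; [reflexivity|]. rewrite tree_of_Fterm_node by assumption. split; assumption.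
Qed.

Lemma Tterm_tree_inj t t' : Tterm t -> Tterm t' -> tree_of t = tree_of t' -> t = t'.
Proof.
  intro H. revert t'.
  induction H as [|a t1 t2 H1 IH1 H2 IH2]; intros t' H' E;
    destruct H' as [|a' t1' t2' H1' H2'];
    rewrite ?tree_of_neg_literal in E by (apply Tterm_all_true; assumption);
    try discriminate; [reflexivity|].
  injection E as -> E2 E1. rewrite (IH1 _ H1' E1), (IH2 _ H2' E2). reflexivity.
Qed.

Lemma Fterm_tree_inj f f' : Fterm f -> Fterm f' -> tree_of f = tree_of f' -> f = f'.
Proof.
  intro H. revert f'.
  induction H as [|a f1 f2 H1 IH1 H2 IH2]; intros f' H' E;
    destruct H' as [|a' f1' f2' H1' H2'];
    rewrite ?tree_of_Fterm_node in E by (apply Fterm_all_false; assumption);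
    try discriminate; [reflexivity|].
  injection E as -> E2 E1. rewrite (IH1 _ H1' E1), (IH2 _ H2' E2). reflexivity.
Qed.

Lemma Tterm_Fterm_tree_neq t f : Tterm t -> Fterm f -> tree_of t <> tree_of f.
Proof.
  intros Ht Hf E. pose proof (Tterm_all_true Ht) as H. rewrite E in H.
  discriminate (all_leaves_unique H (Fterm_all_false Hf)).
Qed.

Lemma Sterm_literal_tree n s : Sterm Lit n s ->
  exists b a X Y, tree_of s = Node a X Y /\ all_leaves b X /\ all_leaves (negb b) Y.
Proof.
  inversion 1 as [a t f Ht Hf|a t f Ht Hf| |]; subst.
  - exists true, a, (tree_of t), (tree_of f).
    rewrite tree_of_pos_literal by (apply Tterm_all_true, Ht).
    auto using Tterm_all_true, Fterm_all_false.
  - exists false, a, (tree_of f), (tree_of t).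
    rewrite tree_of_neg_literal by (apply Tterm_all_true, Ht).
    auto using Tterm_all_true, Fterm_all_false.
Qed.

Lemma Sterm_literal_props n s : Sterm Lit n s ->
  mixed (tree_of s) /\ skew (tree_of s) /\ forall b, graft_irreducible b (tree_of s).
Proof.
  intro Hs. destruct (Sterm_literal_tree Hs) as [b [a [X [Y [-> [HX HY]]]]]].
  split; [|split]; [exact (literal_mixed a HX HY)|exact (literal_skew a HX HY)|].
  intro b'. exact (literal_irreducible HX HY).
Qed.

Lemma Sterm_mixed k n s : Sterm k n s -> mixed (tree_of s).
Proof.
  induction 1 as [a t f Ht Hf|a t f Ht Hf|k1 k2 n1 n2 s d H1 M1 H2 M2 Hk
                 |k1 k2 n1 n2 s c H1 M1 H2 M2 Hk].
  - exact (proj1 (Sterm_literal_props (Slit_pos a Ht Hf))).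
  - exact (proj1 (Sterm_literal_props (Slit_neg a Ht Hf))).
  - rewrite tree_of_sand. apply mixed_graft; assumption.
  - rewrite tree_of_sor. apply mixed_graft; assumption.
Qed.

Lemma Sterm_skew k n s : Sterm k n s -> skew (tree_of s).
Proof.
  induction 1 as [a t f Ht Hf|a t f Ht Hf|k1 k2 n1 n2 s d H1 S1 H2 _ Hk
                 |k1 k2 n1 n2 s c H1 S1 H2 _ Hk].
  - exact (proj1 (proj2 (Sterm_literal_props (Slit_pos a Ht Hf)))).
  - exact (proj1 (proj2 (Sterm_literal_props (Slit_neg a Ht Hf)))).
  - rewrite tree_of_sand. apply skew_graft; [exact S1|exact (Sterm_mixed H2)].
  - rewrite tree_of_sor. apply skew_graft; [exact S1|exact (Sterm_mixed H2)].
Qed.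

(* The tree of a conjunction is a [true]-graft, that of a disjunction a [false]-graft. *)
Lemma Sterm_irreducible k n s : Sterm k n s ->
  (k <> Conj -> graft_irreducible true (tree_of s)) /\
  (k <> Disj -> graft_irreducible false (tree_of s)).
Proof.
  intro Hs. destruct (kind_eq_dec k Lit) as [->|Hk].
  { pose proof (proj2 (proj2 (Sterm_literal_props Hs))). auto. }
  destruct Hs as [| |k1 k2 n1 n2 s d H1 H2 _|k1 k2 n1 n2 s c H1 H2 _]; try congruence.
  - split; [congruence|intros _]. rewrite tree_of_sand.
    apply (graft_skew_irreducible (b := true)); eauto using Sterm_skew, Sterm_mixed.
  - split; [intros _|congruence]. rewrite tree_of_sor.
    apply (graft_skew_irreducible (b := false)); eauto using Sterm_skew, Sterm_mixed.
Qed.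

Lemma Sterm_literal_not_graft n s k' n' s' : Sterm Lit n s -> Sterm k' n' s' -> k' <> Lit ->
  tree_of s <> tree_of s'.
Proof.
  intros Hs Hs' Hk'. destruct (Sterm_literal_tree Hs) as [b [a [X [Y [-> [HX HY]]]]]].
  destruct Hs' as [| |k1 k2 n1 n2 s1 d H1 H2 _|k1 k2 n1 n2 s1 c H1 H2 _];
    try congruence; [rewrite tree_of_sand|rewrite tree_of_sor];
    exact (literal_not_graft (Sterm_mixed H1) (Sterm_mixed H2) HX HY).
Qed.

Lemma Sterm_literal_inj n s n' s' : Sterm Lit n s -> Sterm Lit n' s' ->
  tree_of s = tree_of s' -> s = s'.
Proof.
  inversion 1 as [a t f Ht Hf|a t f Ht Hf| |]; inversion 1 as [a' t' f' Ht' Hf'|a' t' f' Ht' Hf'| |];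
    subst; rewrite ?tree_of_pos_literal, ?tree_of_neg_literal by (apply Tterm_all_true; assumption);
    intro E; injection E as -> E1 E2.
  - rewrite (Tterm_tree_inj Ht Ht' E1), (Fterm_tree_inj Hf Hf' E2). reflexivity.
  - exfalso. exact (Tterm_Fterm_tree_neq Ht Hf' E1).
  - exfalso. exact (Tterm_Fterm_tree_neq Ht' Hf (eq_sym E1)).
  - rewrite (Tterm_tree_inj Ht Ht' E2), (Fterm_tree_inj Hf Hf' E1). reflexivity.
Qed.

Lemma Sterm_tree_inj k n s k' n' s' : Sterm k n s -> Sterm k' n' s' ->
  tree_of s = tree_of s' -> s = s'.
Proof.
  intro H. revert k' n' s'.
  induction H as [a t f Ht Hf|a t f Ht Hf|k1 k2 n1 n2 s d H1 IH1 H2 IH2 Hk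
                 |k1 k2 n1 n2 s c H1 IH1 H2 IH2 Hk]; intros k' n' s' H' E.
  1, 2: destruct (kind_eq_dec k' Lit) as [->|Hk'];
    [ refine (Sterm_literal_inj _ H' E); constructor; assumption
    | exfalso; refine (Sterm_literal_not_graft _ H' Hk' E); constructor; assumption ].
  all: destruct H' as [a' t' f' Ht' Hf'|a' t' f' Ht' Hf'|k1' k2' n1' n2' s1' d' H1' H2' Hk'
                      |k1' k2' n1' n2' s1' d' H1' H2' Hk'].
  1, 2, 5, 6: exfalso; refine (Sterm_literal_not_graft _ _ _ (eq_sym E));
    [constructor; assumption|econstructor; eassumption|discriminate].
  - rewrite !tree_of_sand in E.
    destruct (graft_irreducible_inj (Sterm_mixed H1) (Sterm_mixed H1') (Sterm_mixed H2)
      (Sterm_mixed H2') (proj1 (Sterm_irreducible H2) Hk) (proj1 (Sterm_irreducible H2') Hk') E)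
      as [E1 E2].
    rewrite (IH1 _ _ _ H1' E1), (IH2 _ _ _ H2' E2). reflexivity.
  - exfalso. apply (graft_not_irreducible (b := true) (Sterm_mixed H1) (Sterm_mixed H2)).
    rewrite <- tree_of_sand, E. apply (Sterm_irreducible (Sdisj H1' H2' Hk')). discriminate.
  - exfalso. apply (graft_not_irreducible (b := false) (Sterm_mixed H1) (Sterm_mixed H2)).
    rewrite <- tree_of_sor, E. apply (Sterm_irreducible (Sconj H1' H2' Hk')). discriminate.
  - rewrite !tree_of_sor in E.
    destruct (graft_irreducible_inj (Sterm_mixed H1) (Sterm_mixed H1') (Sterm_mixed H2)
      (Sterm_mixed H2') (proj2 (Sterm_irreducible H2) Hk) (proj2 (Sterm_irreducible H2') Hk') E)
      as [E1 E2].
    rewrite (IH1 _ _ _ H1' E1), (IH2 _ _ _ H2' E2). reflexivity.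
Qed.

Lemma Tterm_Sterm_mixed t k n s : Tterm t -> Sterm k n s -> mixed (tree_of (SAnd t s)).
Proof.
  intros Ht Hs. rewrite tree_of_sand. pose proof (Sterm_mixed Hs) as M. split.
  - apply has_leaf_graft; [apply all_leaves_has_leaf, Tterm_all_true, Ht|apply M].
  - exact (has_leaf_graft_other true (tree_of t) M).
Qed.

Lemma normal_form_tree_inj x y : normal_form x -> normal_form y -> tree_of x = tree_of y -> x = y.
Proof.
  unfold normal_form.
  intros [Hx|[Hx|[t [k [n [s [-> [Ht Hs]]]]]]]] [Hy|[Hy|[t' [k' [n' [s' [-> [Ht' Hs']]]]]]]] E.
  - exact (Tterm_tree_inj Hx Hy E).
  - destruct (Tterm_Fterm_tree_neq Hx Hy E).
  - pose proof (Tterm_Sterm_mixed Ht' Hs') as M. rewrite <- E in M.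
    destruct (mixed_not_all M (Tterm_all_true Hx)).
  - destruct (Tterm_Fterm_tree_neq Hy Hx (eq_sym E)).
  - exact (Fterm_tree_inj Hx Hy E).
  - pose proof (Tterm_Sterm_mixed Ht' Hs') as M. rewrite <- E in M.
    destruct (mixed_not_all M (Fterm_all_false Hx)).
  - pose proof (Tterm_Sterm_mixed Ht Hs) as M. rewrite E in M.
    destruct (mixed_not_all M (Tterm_all_true Hy)).
  - pose proof (Tterm_Sterm_mixed Ht Hs) as M. rewrite E in M.
    destruct (mixed_not_all M (Fterm_all_false Hy)).
  - rewrite !tree_of_sand in E.
    destruct (graft_uniform_skew_inj (Tterm_all_true Ht) (Tterm_all_true Ht')
      (Sterm_skew Hs) (Sterm_skew Hs') E) as [E1 E2].
    rewrite (Tterm_tree_inj Ht Ht' E1), (Sterm_tree_inj Hs Hs' E2). reflexivity.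
Qed.

Lemma EqFSCL_of_same_tree P Q : sclosed P -> sclosed Q -> tree_of P = tree_of Q ->
  EqFSCL_derives P Q.
Proof.
  intros HP HQ E.
  destruct (closed_normal_form HP) as [N [HN EN]].
  destruct (closed_normal_form HQ) as [M [HM EM]].
  assert (N = M) as <-.
  { apply normal_form_tree_inj; [exact HN|exact HM|].
    rewrite <- (EqFSCL_sound EN ev0), <- (EqFSCL_sound EM ev0). exact E. }
  rewrite EN, EM. reflexivity.
Qed.

End FSCL.

Theorem theorem4p3 (A : Type) (a0 : A) (P Q : sterm A) :
  sclosed P -> sclosed Q ->
  (EqFSCL_derives P Q <-> FSCL_derives (embed P) (embed Q)).
Proof.
  intros HP HQ. split; intro H.
  - apply FSCL_of_same_tree with (ev0 A); [exact HP|exact HQ|].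
    exact (EqFSCL_sound H (ev0 A)).
  - apply EqFSCL_of_same_tree; [exact HP|exact HQ|].
    rewrite <- !csem_embed. exact (FSCL_sound H (ev0 A)).
Qed.
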